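(* Let $G$ be the lattice $\mathbb Z$, unweighted, with $\mu\equiv1$. Let $x_0\in\mathbb Z$, $r\in\mathbb N$, and let $u:[0,\infty)\times\mathbb Z\to(0,\infty)$, $C^1$ in $t$, satisfy $\partial_tu=\Delta u$ on $[0,\infty)\times\bar B_{2r}(x_0)$. Then there is an absolute constant $C>0$ (independent of $x_0$, $r$, $u$) such that $$\partial_t(\log u)\ge\Psi_\Upsilon(\log u)-\varphi(t)-\frac Cr\quad\text{on }(0,\infty)\times\bar B_r(x_0),$$ where $\varphi$ is the relaxation function of the CD-function $F(a)=2e^{-a/2}\big(\Upsilon(a)+\Upsilon(-a)\big)$.
   Context: $\Delta u(x)=u(x+1)-2u(x)+u(x-1)$; $\Psi_H(v)(x)=\sum_{y\in\{x\pm1\}}H(v(y)-v(x))$; $\Upsilon(z)=e^z-1-z$; $\bar B_\rho(x_0)=\{y\in\mathbb Z:|y-x_0|\le\rho\}$. The relaxation function of a CD-function $F$ (continuous $F:[0,\infty)\to[0,\infty)$, $F(0)=0$, $F(x)/x$ strictly increasing, $\int_1^\infty dr/F<\infty$) is the unique positive solution $\varphi$ of $\dot\varphi+F(\varphi)=0$ on $(0,\infty)$ with $\varphi(0+)=\infty$. *)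

From Stdlib Require Export Reals ZArith.
Open Scope R_scope.

Definition Ups (z : R) : R := exp z - 1 - z.

Definition Psi (H : R -> R) (v : Z -> R) (x : Z) : R :=
  H (v (x + 1)%Z - v x) + H (v (x - 1)%Z - v x).

Definition lap (v : Z -> R) (x : Z) : R := v (x + 1)%Z - 2 * v x + v (x - 1)%Z.

Definition in_ball (x0 : Z) (rho : nat) (x : Z) : Prop :=
  (Z.abs (x - x0) <= Z.of_nat rho)%Z.

Definition F57 (a : R) : R := 2 * exp (- a / 2) * (Ups a + Ups (- a)).

Definition relaxation_function (F : R -> R) (phi : R -> R) : Prop :=
  (forall t, 0 < t -> 0 < phi t) /\
  (forall t, 0 < t -> derivable_pt_lim phi t (- F (phi t))) /\
  (forall M, exists delta, 0 < delta /\
     forall t, 0 < t < delta -> M < phi t).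

Definition C1_nonneg (f df : R -> R) : Prop :=
  (forall t, 0 < t -> derivable_pt_lim f t (df t)) /\
  (forall eps, 0 < eps -> exists delta, 0 < delta /\
     forall h, 0 < h < delta -> Rabs ((f h - f 0) / h - df 0) < eps) /\
  (forall t, 0 <= t -> forall eps, 0 < eps -> exists delta, 0 < delta /\
     forall s, 0 <= s -> Rabs (s - t) < delta -> Rabs (df s - df t) < eps).

From Stdlib Require Import Reals ZArith Lra Lia Psatz Classical.
Open Scope R_scope.

(* With s := - lap (ln u), one has Psi Ups (ln u) = lap u / u + s, so the claim says s <= phi + C / r
   on the ball of radius r.  By induction on j, s < phi + 8 / j on the ball of radius 2r - j: near
   t = 0 the function s stays bounded while phi blows up, and at a first time where s = phi + eps
   the heat equation gives d/dt s < - F57 phi = phi'.  At that time the bound on the neighbours,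
   s < phi + 8 / (j - 1), controls the ratios of second neighbours; the induction closes because
   exp (8 / j) + exp (- 8 / (j - 1)) >= 2. *)

Lemma touching_ineq_poly (a b w p r0 : R) :
  0 < a -> 0 < b -> 0 < w < 1 -> 1 < p -> 0 <= r0 <= 1 -> 2 <= p * p + r0 ->
  a * b * (p * p) = w * w ->
  (2 - r0 * (w * w)) * (a + b) - (/ a + / b) < - (2 * w * (/ (w * w) + w * w - 2)).
Proof.
  intros Ha Hb Hw Hp Hr Hpr Hab.
  set (q := w * w).
  assert (Hq : 0 < q < 1) by (unfold q; nra).
  assert (Hinv : / a + / b = (a + b) * (p * p) / q) by (unfold q; rewrite <- Hab; field; lra).
  set (K := 2 - r0 * q - p * p / q).
  assert (HKq : K * q = 2 * q - r0 * q * q - p * p) by (unfold K; field; lra).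
  assert (HK : K * q < 0).
  { rewrite HKq.
    assert (0 < (1 - q) * (2 - r0 * (1 + q))) by (apply Rmult_lt_0_compat; nra).
    nra. }
  (* a + b carries the negative coefficient K, so AM-GM on a b = (w / p)^2 reduces the claim
     to a polynomial inequality in p and q. *)
  assert (Hamgm : 2 * w <= p * (a + b)).
  { assert (Hsq : (2 * w) * (2 * w) <= (p * (a + b)) * (p * (a + b))).
    { replace ((p * (a + b)) * (p * (a + b)))
        with (p * p * ((a - b) * (a - b)) + 4 * (a * b * (p * p))) by ring.
      rewrite Hab; unfold q.
      assert (0 <= p * p * ((a - b) * (a - b))) by (apply Rmult_le_pos; apply Rle_0_sqr).
      lra. }
    apply Rsqr_incr_0_var; [exact Hsq | nra]. }
  assert (Hpoly : 0 < p * p - p * (1 - q) * (1 - q) - 2 * q + r0 * q * q).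
  { replace (p * p - p * (1 - q) * (1 - q) - 2 * q + r0 * q * q)
      with ((1 - q) * (p * (p - 1)) + q * (p * p + r0 - 2) + q * (1 - q) * (p - r0)) by ring.
    assert (0 < (1 - q) * (p * (p - 1))) by (apply Rmult_lt_0_compat; nra).
    assert (0 <= q * (p * p + r0 - 2)) by (apply Rmult_le_pos; lra).
    assert (0 <= q * (1 - q) * (p - r0)) by (apply Rmult_le_pos; [apply Rmult_le_pos|]; lra).
    lra. }
  rewrite Hinv.
  replace ((2 - r0 * q) * (a + b) - (a + b) * (p * p) / q) with ((a + b) * K)
    by (unfold K; field; lra).
  replace (- (2 * w * (/ q + q - 2))) with (- 2 * w * (1 - q) * (1 - q) / q) by (field; lra).
  apply Rmult_lt_reg_r with (p * q); [nra|].
  replace ((a + b) * K * (p * q)) with (p * (a + b) * (K * q)) by ring.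
  replace (- 2 * w * (1 - q) * (1 - q) / q * (p * q)) with (- 2 * w * (p * (1 - q) * (1 - q)))
    by (field; lra).
  apply Rle_lt_trans with (2 * w * (K * q)).
  - rewrite (Rmult_comm (p * (a + b))), (Rmult_comm (2 * w)).
    apply Rmult_le_compat_neg_l; lra.
  - rewrite HKq.
    replace (- 2 * w * (p * (1 - q) * (1 - q))) with (2 * w * - (p * (1 - q) * (1 - q))) by ring.
    apply Rmult_lt_compat_l; lra.
Qed.

Lemma touching_ineq_F57 (a b ph eps r0 : R) :
  0 < a -> 0 < b -> 0 < ph -> 0 < eps -> 0 <= r0 <= 1 -> 2 <= exp eps + r0 ->
  a * b = exp (- (ph + eps)) ->
  (2 - r0 * exp (- ph)) * (a + b) - (/ a + / b) < - F57 ph.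
Proof.
  intros Ha Hb Hph Heps Hr Hsum Hab.
  set (w := exp (- ph / 2)); set (p := exp (eps / 2)).
  assert (Hww : w * w = exp (- ph)) by (unfold w; rewrite <- exp_plus; f_equal; field).
  assert (Hpp : p * p = exp eps) by (unfold p; rewrite <- exp_plus; f_equal; field).
  assert (Hw : 0 < w < 1) by (split; [apply exp_pos | rewrite <- exp_0; apply exp_increasing; lra]).
  assert (Hp : 1 < p) by (rewrite <- exp_0; apply exp_increasing; lra).
  assert (HF : F57 ph = 2 * w * (/ (w * w) + w * w - 2)).
  { unfold F57, Ups. rewrite Hww, exp_Ropp. unfold w. field. apply Rgt_not_eq, exp_pos. }
  rewrite HF, <- Hww.
  apply (touching_ineq_poly a b w p r0); try lra.
  rewrite Hab, Hpp, Hww, <- exp_plus. f_equal. ring.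
Qed.

Lemma exp_lap_ln (v : Z -> R) (k : Z) : (forall j, 0 < v j) ->
  exp (lap (fun j => ln (v j)) k) = v (k + 1)%Z * v (k - 1)%Z / (v k * v k).
Proof.
  intros Hv. unfold lap.
  replace (ln (v (k + 1)%Z) - 2 * ln (v k) + ln (v (k - 1)%Z))
    with (ln (v (k + 1)%Z) + ln (v (k - 1)%Z) + - (ln (v k) + ln (v k))) by ring.
  rewrite !exp_plus, exp_Ropp, exp_plus, !exp_ln by apply Hv.
  reflexivity.
Qed.

Lemma Psi_Ups_ln (v : Z -> R) (x : Z) : (forall j, 0 < v j) ->
  Psi Ups (fun j => ln (v j)) x = lap v x / v x - lap (fun j => ln (v j)) x.
Proof.
  intros Hv. pose proof (Hv x).
  unfold Psi, Ups, lap, Rminus.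
  rewrite !exp_plus, exp_Ropp, !exp_ln by apply Hv.
  field. lra.
Qed.

(* [- lap (lap v / v)] is the time derivative of [- lap (ln u)] along the heat flow. *)
Lemma heat_flow_touching_bound (v : Z -> R) (y : Z) (ph eps r0 : R) :
  (forall k, 0 < v k) -> 0 < ph -> 0 < eps -> 0 <= r0 <= 1 -> 2 <= exp eps + r0 ->
  - lap (fun k => ln (v k)) y = ph + eps ->
  r0 * exp (- ph) * (v (y + 1)%Z * v (y + 1)%Z) <= v (y + 1 + 1)%Z * v y ->
  r0 * exp (- ph) * (v (y - 1)%Z * v (y - 1)%Z) <= v (y - 1 - 1)%Z * v y ->
  - lap (fun k => lap v k / v k) y < - F57 ph.
Proof.
  intros Hv Hph Heps Hr Hsum Htouch Hright Hleft.
  pose proof (Hv y) as H0; pose proof (Hv (y + 1)%Z) as H1; pose proof (Hv (y - 1)%Z) as Hm.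
  set (a := v (y + 1)%Z / v y); set (b := v (y - 1)%Z / v y).
  assert (Hab : a * b = exp (- (ph + eps))).
  { rewrite <- Htouch, Ropp_involutive, exp_lap_ln by exact Hv.
    unfold a, b. field. lra. }
  assert (Ha : r0 * exp (- ph) * a <= v (y + 1 + 1)%Z / v (y + 1)%Z).
  { apply Rmult_le_reg_r with (v (y + 1)%Z * v y); [nra|].
    replace (r0 * exp (- ph) * a * (v (y + 1)%Z * v y))
      with (r0 * exp (- ph) * (v (y + 1)%Z * v (y + 1)%Z)) by (unfold a; field; lra).
    replace (v (y + 1 + 1)%Z / v (y + 1)%Z * (v (y + 1)%Z * v y))
      with (v (y + 1 + 1)%Z * v y) by (field; lra).
    exact Hright. }
  assert (Hb : r0 * exp (- ph) * b <= v (y - 1 - 1)%Z / v (y - 1)%Z).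
  { apply Rmult_le_reg_r with (v (y - 1)%Z * v y); [nra|].
    replace (r0 * exp (- ph) * b * (v (y - 1)%Z * v y))
      with (r0 * exp (- ph) * (v (y - 1)%Z * v (y - 1)%Z)) by (unfold b; field; lra).
    replace (v (y - 1 - 1)%Z / v (y - 1)%Z * (v (y - 1)%Z * v y))
      with (v (y - 1 - 1)%Z * v y) by (field; lra).
    exact Hleft. }
  assert (Hderiv : - lap (fun k => lap v k / v k) y
    = 2 * (a + b) - v (y + 1 + 1)%Z / v (y + 1)%Z - v (y - 1 - 1)%Z / v (y - 1)%Z - (/ a + / b)).
  { unfold lap, a, b. replace (y + 1 - 1)%Z with y by ring. replace (y - 1 + 1)%Z with y by ring.
    field. lra. }
  pose proof (touching_ineq_F57 a b ph eps r0) as Hkey.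
  assert (0 < a) by (apply Rdiv_lt_0_compat; lra).
  assert (0 < b) by (apply Rdiv_lt_0_compat; lra).
  rewrite Hderiv. specialize (Hkey ltac:(lra) ltac:(lra) Hph Heps Hr Hsum Hab). lra.
Qed.

Lemma derivable_pt_lim_increment (h : R -> R) (T l : R) : derivable_pt_lim h T l ->
  forall eps, 0 < eps -> exists del, 0 < del /\
    forall k, Rabs k < del -> Rabs (h (T + k) - h T - k * l) <= eps * Rabs k.
Proof.
  intros Hd eps Heps.
  destruct (Hd eps Heps) as [del Hdel].
  exists del. split; [apply cond_pos|].
  intros k Hk. destruct (Req_dec k 0) as [->|Hk0].
  - rewrite Rplus_0_r, Rabs_R0. replace (h T - h T - 0 * l) with 0 by ring. rewrite Rabs_R0. lra.
  - specialize (Hdel k Hk0 Hk).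
    replace (h (T + k) - h T - k * l) with (k * ((h (T + k) - h T) / k - l)) by (field; exact Hk0).
    rewrite Rabs_mult, Rmult_comm. apply Rmult_le_compat_r; [apply Rabs_pos | lra].
Qed.

Lemma derivable_pt_lim_neg_near (h : R -> R) (T l : R) : derivable_pt_lim h T l -> h T < 0 ->
  exists del, 0 < del /\ forall k, Rabs k < del -> h (T + k) < 0.
Proof.
  intros Hd HT.
  destruct (derivable_pt_lim_increment h T l Hd 1 Rlt_0_1) as [del [Hdel Hinc]].
  assert (Hl : 0 < Rabs l + 1) by (pose proof (Rabs_pos l); lra).
  exists (Rmin del (- h T / (Rabs l + 1))). split.
  { apply Rmin_pos; [lra | apply Rdiv_lt_0_compat; lra]. }
  intros k Hk.
  pose proof (Rmin_l del (- h T / (Rabs l + 1))); pose proof (Rmin_r del (- h T / (Rabs l + 1))).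
  specialize (Hinc k ltac:(lra)).
  assert (Hkl : Rabs k * (Rabs l + 1) < - h T).
  { apply Rmult_lt_reg_r with (/ (Rabs l + 1)); [apply Rinv_0_lt_compat; lra|].
    rewrite Rmult_assoc, Rinv_r by lra. unfold Rdiv in *. lra. }
  pose proof (Rle_abs (h (T + k) - h T - k * l)).
  pose proof (Rle_abs (k * l)). rewrite Rabs_mult in *.
  nra.
Qed.

Lemma derivable_pt_lim_pos_left (h : R -> R) (T l : R) : derivable_pt_lim h T l ->
  0 < h T \/ (h T = 0 /\ l < 0) ->
  exists del, 0 < del /\ forall m, 0 < m < del -> 0 < h (T - m).
Proof.
  intros Hd [Hpos | [Hzero Hl]].
  - assert (Hd' : derivable_pt_lim (opp_fct h) T (- l)) by (apply derivable_pt_lim_opp; exact Hd).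
    destruct (derivable_pt_lim_neg_near (opp_fct h) T (- l) Hd' ltac:(unfold opp_fct; lra))
      as [del [Hdel Hnear]].
    exists del. split; [exact Hdel|]. intros m Hm.
    specialize (Hnear (- m) ltac:(rewrite Rabs_Ropp, Rabs_right; lra)).
    unfold opp_fct in Hnear. unfold Rminus. lra.
  - destruct (derivable_pt_lim_increment h T l Hd (- l / 2) ltac:(lra)) as [del [Hdel Hinc]].
    exists del. split; [exact Hdel|]. intros m Hm.
    specialize (Hinc (- m) ltac:(rewrite Rabs_Ropp, Rabs_right; lra)).
    rewrite Rabs_Ropp, (Rabs_right m) in Hinc by lra.
    pose proof (Rle_abs (- (h (T + - m) - h T - - m * l))). rewrite Rabs_Ropp in *.
    unfold Rminus. nra.
Qed.

Lemma sup_negative_prefix (h : R -> R) (a b : R) : a <= b -> h a < 0 ->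
  exists T, a <= T <= b /\ (forall s, a <= s < T -> h s < 0) /\
    forall k, 0 < k -> T + k <= b -> exists s, T <= s <= T + k /\ 0 <= h s.
Proof.
  intros Hab Ha.
  set (E := fun t => a <= t <= b /\ forall s, a <= s <= t -> h s < 0).
  assert (HEa : E a) by (split; [lra | intros s Hs; replace s with a by lra; exact Ha]).
  destruct (completeness E) as [T [Hub Hlub]].
  { exists b. intros t [Ht _]. lra. }
  { exists a. exact HEa. }
  assert (HaT : a <= T) by (apply Hub; exact HEa).
  assert (HTb : T <= b) by (apply Hlub; intros t [Ht _]; lra).
  assert (Hbefore : forall s, a <= s < T -> h s < 0).
  { intros s Hs.
    destruct (classic (exists t, E t /\ s <= t)) as [[t [[_ Ht] Hst]] | Hno].
    - apply Ht. lra.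
    - exfalso. assert (T <= s); [|lra].
      apply Hlub. intros t Et. apply Rnot_lt_le. intro Hst.
      apply Hno. exists t. split; [exact Et | lra]. }
  exists T. split; [lra|]. split; [exact Hbefore|].
  intros k Hk HTk.
  apply NNPP. intro Hno.
  assert (HE : E (T + k)).
  { split; [lra|]. intros s Hs.
    destruct (Rlt_or_le s T) as [HsT | HsT]; [apply Hbefore; lra|].
    apply Rnot_le_lt. intro Hs0. apply Hno. exists s. split; [lra | exact Hs0]. }
  specialize (Hub _ HE). lra.
Qed.

Lemma comparison_principle (h h' : R -> R) (d : R) : 0 < d ->
  (forall t, 0 < t -> derivable_pt_lim h t (h' t)) ->
  (forall t, 0 < t < d -> h t < 0) ->
  (forall t, 0 < t -> h t = 0 -> h' t < 0) ->
  forall t, 0 < t -> h t < 0.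
Proof.
  intros Hd Hder Hsmall Hroot t1 Ht1.
  apply Rnot_le_lt. intro Ht1nn.
  assert (Ha : h (d / 2) < 0) by (apply Hsmall; lra).
  assert (Hat1 : d / 2 <= t1).
  { destruct (Rlt_or_le t1 d) as [Ht1d | Ht1d]; [|lra].
    specialize (Hsmall t1 ltac:(lra)). lra. }
  destruct (sup_negative_prefix h (d / 2) t1 Hat1 Ha) as [T [[HaT HTt1] [Hbefore Hsup]]].
  assert (HT0 : 0 < T) by lra.
  assert (HTnn : 0 <= h T).
  { apply Rnot_lt_le. intro HTneg.
    destruct (derivable_pt_lim_neg_near h T (h' T) (Hder T HT0) HTneg) as [del [Hdel Hnear]].
    assert (HTlt : T < t1) by (destruct (Req_dec T t1) as [->|]; lra).
    pose proof (Rmin_l (del / 2) (t1 - T)); pose proof (Rmin_r (del / 2) (t1 - T)).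
    destruct (Hsup (Rmin (del / 2) (t1 - T))) as [s [Hs Hs0]].
    { apply Rmin_pos; lra. }
    { lra. }
    specialize (Hnear (s - T)). replace (T + (s - T)) with s in Hnear by ring.
    rewrite Rabs_right in Hnear by lra. specialize (Hnear ltac:(lra)). lra. }
  assert (HaT' : d / 2 < T).
  { destruct (Req_dec T (d / 2)) as [E|]; [rewrite E in HTnn; lra | lra]. }
  destruct (derivable_pt_lim_pos_left h T (h' T) (Hder T HT0)) as [del [Hdel Hleft]].
  { destruct HTnn as [Hp | Hz]; [left; exact Hp | right; split; [|apply Hroot]; auto]. }
  pose proof (Rmin_l (del / 2) ((T - d / 2) / 2)); pose proof (Rmin_r (del / 2) ((T - d / 2) / 2)).
  set (m := Rmin (del / 2) ((T - d / 2) / 2)) in *.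
  assert (Hm : 0 < m) by (apply Rmin_pos; lra).
  specialize (Hleft m ltac:(lra)). specialize (Hbefore (T - m) ltac:(lra)). lra.
Qed.

Lemma C1_nonneg_near0 (v dv : R -> R) : C1_nonneg v dv -> 0 < v 0 ->
  exists d, 0 < d /\ forall t, 0 < t < d -> v 0 / 2 < v t < 2 * v 0.
Proof.
  intros [_ [Hright _]] Hv0.
  destruct (Hright 1 Rlt_0_1) as [del [Hdel Hquot]].
  set (L := Rabs (dv 0) + 1).
  assert (HL : 0 < L) by (unfold L; pose proof (Rabs_pos (dv 0)); lra).
  exists (Rmin del (v 0 / (2 * L))). split.
  { apply Rmin_pos; [lra | apply Rdiv_lt_0_compat; lra]. }
  intros t Ht.
  pose proof (Rmin_l del (v 0 / (2 * L))); pose proof (Rmin_r del (v 0 / (2 * L))).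
  specialize (Hquot t ltac:(lra)).
  assert (Hslope : Rabs (v t - v 0) <= t * L).
  { replace (v t - v 0) with (t * ((v t - v 0) / t)) by (field; lra).
    rewrite Rabs_mult, Rabs_right by lra.
    apply Rmult_le_compat_l; [lra|].
    pose proof (Rabs_triang_inv ((v t - v 0) / t) (dv 0)). unfold L. lra. }
  assert (Ht2L : t * L < v 0 / 2).
  { apply Rmult_lt_reg_r with (/ L); [apply Rinv_0_lt_compat; lra|].
    replace (t * L * / L) with t by (field; lra).
    replace (v 0 / 2 * / L) with (v 0 / (2 * L)) by (field; lra). lra. }
  pose proof (Rle_abs (v t - v 0)); pose proof (Rle_abs (- (v t - v 0))). rewrite Rabs_Ropp in *.
  lra.
Qed.

Lemma exp_level_step (K : R) : 1 <= K -> 2 <= exp (8 / (K + 1)) + exp (- (8 / K)).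
Proof.
  intros HK.
  assert (Hsq : exp (8 / (K + 1)) = exp (4 / (K + 1)) * exp (4 / (K + 1)))
    by (rewrite <- exp_plus; f_equal; field; lra).
  assert (H4 : 0 <= 4 / (K + 1)) by (apply Rlt_le, Rdiv_lt_0_compat; lra).
  pose proof (exp_ineq1_le (4 / (K + 1))) as Hexp4.
  pose proof (exp_ineq1_le (- (8 / K))) as Hexp8.
  assert (Hprod : (1 + 4 / (K + 1)) * (1 + 4 / (K + 1)) <= exp (8 / (K + 1)))
    by (rewrite Hsq; apply Rmult_le_compat; lra).
  assert (Hgap : (1 + 4 / (K + 1)) * (1 + 4 / (K + 1)) - (1 + 8 / K)
                 = 8 * (K - 1) / (K * ((K + 1) * (K + 1)))) by (field; lra).
  assert (0 <= 8 * (K - 1) / (K * ((K + 1) * (K + 1)))).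
  { apply Rmult_le_pos; [lra|]. apply Rlt_le, Rinv_0_lt_compat. apply Rmult_lt_0_compat; nra. }
  lra.
Qed.

Lemma neighbor_product_of_neg_lap_ln (v : Z -> R) (k : Z) (z : R) : (forall j, 0 < v j) ->
  - lap (fun j => ln (v j)) k < z -> exp (- z) * (v k * v k) <= v (k + 1)%Z * v (k - 1)%Z.
Proof.
  intros Hv Hz. pose proof (Hv k).
  assert (Hlt : exp (- z) < exp (lap (fun j => ln (v j)) k)) by (apply exp_increasing; lra).
  rewrite exp_lap_ln in Hlt by exact Hv.
  apply Rlt_le. apply Rmult_lt_reg_r with (/ (v k * v k)); [apply Rinv_0_lt_compat; nra|].
  rewrite Rmult_assoc, Rinv_r, Rmult_1_r by nra. exact Hlt.
Qed.

Section LogLaplacian.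

Variables (u du : R -> Z -> R).
Hypothesis u_pos : forall t k, 0 <= t -> 0 < u t k.
Hypothesis u_C1 : forall k, C1_nonneg (fun t => u t k) (fun t => du t k).

Lemma neg_lap_ln_bounded_near0 (y : Z) : exists K d, 0 < d /\
  forall t, 0 < t < d -> - lap (fun k => ln (u t k)) y < K.
Proof.
  destruct (C1_nonneg_near0 _ _ (u_C1 (y + 1)%Z) (u_pos 0 _ (Rle_refl 0))) as [d1 [Hd1 N1]].
  destruct (C1_nonneg_near0 _ _ (u_C1 y) (u_pos 0 _ (Rle_refl 0))) as [d0 [Hd0 N0]].
  destruct (C1_nonneg_near0 _ _ (u_C1 (y - 1)%Z) (u_pos 0 _ (Rle_refl 0))) as [dm [Hdm Nm]].
  exists (- ln (u 0 (y + 1)%Z / 2) + 2 * ln (2 * u 0 y) - ln (u 0 (y - 1)%Z / 2)).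
  exists (Rmin d1 (Rmin d0 dm)). split; [repeat apply Rmin_pos; assumption|].
  intros t Ht.
  pose proof (Rmin_l d1 (Rmin d0 dm)); pose proof (Rmin_r d1 (Rmin d0 dm)).
  pose proof (Rmin_l d0 dm); pose proof (Rmin_r d0 dm).
  specialize (N1 t ltac:(lra)); specialize (N0 t ltac:(lra)); specialize (Nm t ltac:(lra)).
  pose proof (u_pos 0 (y + 1)%Z (Rle_refl 0)); pose proof (u_pos 0 (y - 1)%Z (Rle_refl 0)).
  pose proof (u_pos t y ltac:(lra)).
  assert (ln (u 0 (y + 1)%Z / 2) < ln (u t (y + 1)%Z)) by (apply ln_increasing; lra).
  assert (ln (u t y) < ln (2 * u 0 y)) by (apply ln_increasing; lra).
  assert (ln (u 0 (y - 1)%Z / 2) < ln (u t (y - 1)%Z)) by (apply ln_increasing; lra).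
  unfold lap. lra.
Qed.

Lemma derivable_pt_lim_neg_lap_ln (y : Z) (t : R) : 0 < t ->
  derivable_pt_lim (fun s => - lap (fun k => ln (u s k)) y) t
    (- lap (fun k => du t k / u t k) y).
Proof.
  intros Ht.
  assert (Hln : forall k, derivable_pt_lim (fun s => ln (u s k)) t (du t k / u t k)).
  { intro k. pose proof (u_pos t k ltac:(lra)).
    replace (du t k / u t k) with (/ u t k * du t k) by (field; lra).
    apply (derivable_pt_lim_comp (fun s => u s k) ln).
    - destruct (u_C1 k) as [Hd _]. exact (Hd t Ht).
    - apply derivable_pt_lim_ln. assumption. }
  apply (derivable_pt_lim_opp (fun s => lap (fun k => ln (u s k)) y)).
  apply (derivable_pt_lim_plus
           (minus_fct (fun s => ln (u s (y + 1)%Z)) (mult_real_fct 2 (fun s => ln (u s y))))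
           (fun s => ln (u s (y - 1)%Z))); [|apply Hln].
  apply derivable_pt_lim_minus; [apply Hln|].
  apply derivable_pt_lim_scal. apply Hln.
Qed.

Lemma neg_lap_ln_lt (phi : R -> R) (y : Z) (eps r0 : R) :
  relaxation_function F57 phi ->
  (forall t k, 0 < t -> in_ball y 1 k -> du t k = lap (u t) k) ->
  0 < eps -> 0 <= r0 <= 1 -> 2 <= exp eps + r0 ->
  (forall t, 0 < t ->
     r0 * exp (- phi t) * (u t (y + 1)%Z * u t (y + 1)%Z) <= u t (y + 1 + 1)%Z * u t y) ->
  (forall t, 0 < t ->
     r0 * exp (- phi t) * (u t (y - 1)%Z * u t (y - 1)%Z) <= u t (y - 1 - 1)%Z * u t y) ->
  forall t, 0 < t -> - lap (fun k => ln (u t k)) y < phi t + eps.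
Proof.
  intros [phi_pos [phi_deriv phi_blowup]] Hheat Heps Hr Hsum Hright Hleft.
  destruct (neg_lap_ln_bounded_near0 y) as [K [d1 [Hd1 HK]]].
  destruct (phi_blowup K) as [d2 [Hd2 Hphi]].
  intros t Ht.
  cut (- lap (fun k => ln (u t k)) y - (phi t + eps) < 0); [lra|].
  apply (comparison_principle (fun s => - lap (fun k => ln (u s k)) y - (phi s + eps))
           (fun s => - lap (fun k => du s k / u s k) y + F57 (phi s))
           (Rmin d1 d2)); [apply Rmin_pos; assumption | | | | exact Ht].
  - intros s Hs.
    replace (- lap (fun k => du s k / u s k) y + F57 (phi s))
      with (- lap (fun k => du s k / u s k) y - (- F57 (phi s) + 0)) by ring.
    apply (derivable_pt_lim_minus _ (plus_fct phi (fct_cte eps))).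
    + apply derivable_pt_lim_neg_lap_ln. exact Hs.
    + apply derivable_pt_lim_plus; [apply phi_deriv; exact Hs | apply derivable_pt_lim_const].
  - intros s Hs.
    pose proof (Rmin_l d1 d2); pose proof (Rmin_r d1 d2).
    specialize (HK s ltac:(lra)); specialize (Hphi s ltac:(lra)). lra.
  - intros s Hs Htouch.
    assert (Hdu : lap (fun k => du s k / u s k) y = lap (fun k => lap (u s) k / u s k) y).
    { unfold lap at 1 3. rewrite !Hheat by (lra || (unfold in_ball; lia)). reflexivity. }
    rewrite Hdu.
    pose proof (heat_flow_touching_bound (u s) y (phi s) eps r0 (fun k => u_pos s k ltac:(lra))
                  (phi_pos s Hs) Heps Hr Hsum ltac:(lra) (Hright s Hs) (Hleft s Hs)).
    lra.
Qed.

Lemma neg_lap_ln_lt_level (phi : R -> R) (x0 : Z) (rad : nat) :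
  relaxation_function F57 phi ->
  (forall t x, 0 <= t -> in_ball x0 rad x -> du t x = lap (u t) x) ->
  forall j, (1 <= j <= rad)%nat -> forall t y, 0 < t -> in_ball x0 (rad - j) y ->
    - lap (fun k => ln (u t k)) y < phi t + 8 / INR j.
Proof.
  intros Hphi Hheat j.
  induction j as [|j IH]; intros Hj t y Ht Hy; [lia|].
  assert (Hheat_y : forall t k, 0 < t -> in_ball y 1 k -> du t k = lap (u t) k).
  { intros s k Hs Hk. apply Hheat; [lra | unfold in_ball in *; lia]. }
  destruct j as [|j].
  - replace (8 / INR 1) with 8 by (simpl; field).
    apply (neg_lap_ln_lt phi y 8 0 Hphi Hheat_y); try lra.
    + pose proof (exp_ineq1_le 8). lra.
    + intros s Hs. rewrite !Rmult_0_l.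
      apply Rlt_le, Rmult_lt_0_compat; apply u_pos; lra.
    + intros s Hs. rewrite !Rmult_0_l.
      apply Rlt_le, Rmult_lt_0_compat; apply u_pos; lra.
  - assert (HK : 1 <= INR (S j)) by (rewrite S_INR; pose proof (pos_INR j); lra).
    assert (Hweight : forall s, exp (- (8 / INR (S j))) * exp (- phi s)
                                = exp (- (phi s + 8 / INR (S j))))
      by (intro s; rewrite <- exp_plus; f_equal; ring).
    apply (neg_lap_ln_lt phi y (8 / INR (S (S j))) (exp (- (8 / INR (S j)))) Hphi Hheat_y).
    + apply Rdiv_lt_0_compat; [lra | rewrite S_INR; lra].
    + split; [apply Rlt_le, exp_pos|].
      rewrite <- exp_0. apply Rlt_le, exp_increasing.
      assert (0 < 8 / INR (S j)) by (apply Rdiv_lt_0_compat; lra). lra.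
    + rewrite (S_INR (S j)). apply exp_level_step. exact HK.
    + intros s Hs. rewrite Hweight.
      pose proof (neighbor_product_of_neg_lap_ln (u s) (y + 1)%Z _ (fun k => u_pos s k ltac:(lra))
                    (IH ltac:(lia) s (y + 1)%Z Hs ltac:(unfold in_ball in *; lia))) as Hnb.
      replace (y + 1 - 1)%Z with y in Hnb by ring. exact Hnb.
    + intros s Hs. rewrite Hweight.
      pose proof (neighbor_product_of_neg_lap_ln (u s) (y - 1)%Z _ (fun k => u_pos s k ltac:(lra))
                    (IH ltac:(lia) s (y - 1)%Z Hs ltac:(unfold in_ball in *; lia))) as Hnb.
      replace (y - 1 + 1)%Z with y in Hnb by ring. rewrite (Rmult_comm (u s y)) in Hnb. exact Hnb.
    + exact Ht.
Qed.

End LogLaplacian.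

Theorem theorem5p7 :
  exists C : R, 0 < C /\
  forall (phi : R -> R), relaxation_function F57 phi ->
  forall (x0 : Z) (r : nat) (u du : R -> Z -> R),
    (1 <= r)%nat ->
    (forall t x, 0 <= t -> 0 < u t x) ->
    (forall x, C1_nonneg (fun t => u t x) (fun t => du t x)) ->
    (forall t x, 0 <= t -> in_ball x0 (2 * r) x -> du t x = lap (u t) x) ->
    forall t x, 0 < t -> in_ball x0 r x ->
      du t x / u t x >= Psi Ups (fun y => ln (u t y)) x - phi t - C / INR r.
Proof.
  exists 8. split; [lra|].
  intros phi Hphi x0 r u du Hr Hpos HC1 Hheat t x Ht Hx.
  assert (Hlevel := neg_lap_ln_lt_level u du Hpos HC1 phi x0 (2 * r) Hphi Hheat r
                      ltac:(lia) t x Ht ltac:(unfold in_ball in *; lia)).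
  rewrite Psi_Ups_ln by (intro; apply Hpos; lra).
  rewrite (Hheat t x); [| lra | unfold in_ball in *; lia].
  lra.
Qed.
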